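(* Let $X$ be a $T_1$ topological space with at least two points and let $f\neq g$ be vertices of $\Gamma(C_c(X)_F)$. Then (i) $d(f,g)=1$ iff $Z(f)\cup Z(g)=X$; (ii) $d(f,g)=2$ iff $Z(f)\cup Z(g)\neq X$ and $Z(f)\cap Z(g)\neq\emptyset$; (iii) $d(f,g)=3$ iff $Z(f)\cup Z(g)\neq X$ and $Z(f)\cap Z(g)=\emptyset$.
   Context: $C_c(X)_F$ denotes the set of all functions $f:X\to\mathbb{R}$ whose range is countable and whose set of points of discontinuity is finite; it is a commutative ring under pointwise operations. $Z(f)=\{x:f(x)=0\}$. $\Gamma(C_c(X)_F)$ is the zero-divisor graph: its vertices are the nonzero zero divisors of $C_c(X)_F$ (equivalently the nonzero $f$ with $Z(f)\neq\emptyset$), and distinct vertices $f,g$ are adjacent iff $fg=0$. $d(f,g)$ is the length of a shortest path between $f$ and $g$. *)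

From HB Require Import structures.
From mathcomp Require Import all_boot all_order all_algebra.
From mathcomp Require Import all_classical all_reals all_analysis.
Set Implicit Arguments. Unset Strict Implicit. Unset Printing Implicit Defensive.
Import Order.TTheory GRing.Theory Num.Theory.
Import numFieldNormedType.Exports.
Local Open Scope classical_set_scope.
Local Open Scope ring_scope.

Definition CcF {X : topologicalType} {R : realType} (f : X -> R) : Prop :=
  countable (range f) /\ finite_set [set x : X | ~ {for x, continuous f}].

Definition Zset {X : topologicalType} {R : realType} (f : X -> R) : set X :=
  [set x | f x = 0].

Definition vertex {X : topologicalType} {R : realType} (f : X -> R) : Prop :=
  CcF f /\ f <> (fun _ => 0) /\
  exists h : X -> R, CcF h /\ h <> (fun _ => 0) /\ (fun x => f x * h x) = (fun _ => 0).

Definition adj {X : topologicalType} {R : realType} (f g : X -> R) : Prop :=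
  vertex f /\ vertex g /\ f <> g /\ (fun x => f x * g x) = (fun _ => 0).

Definition walk {X : topologicalType} {R : realType} (n : nat) (f g : X -> R) : Prop :=
  exists v : nat -> (X -> R), v 0%N = f /\ v n = g /\
    (forall i, (i < n)%N -> adj (v i) (v i.+1)).

Definition zd_dist {X : topologicalType} {R : realType} (f g : X -> R) (n : nat) : Prop :=
  walk n f g /\ forall m, (m < n)%N -> ~ walk m f g.

From HB Require Import structures.
From mathcomp Require Import all_boot all_order all_algebra.
From mathcomp Require Import all_classical all_reals all_analysis.
Import Order.TTheory GRing.Theory Num.Theory.
Import numFieldNormedType.Exports.
Local Open Scope classical_set_scope.
Local Open Scope ring_scope.

(* Since X is T1, a point indicator \1_[set a] is continuous off a, so it lies
   in C_c(X)_F, and it is adjacent to every vertex vanishing at a, including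
   \1_[set b] for b <> a.  A common zero a of f and g thus gives the path
   f - \1_[set a] - g, and zeros a <> b of f and g give
   f - \1_[set a] - \1_[set b] - g.  Conversely fg = 0 means Z(f) `|` Z(g) = X,
   and the middle vertex of a path f - h - g is nonzero at some point, which is
   then a common zero of f and g. *)

Section ZeroDivisorGraph.
Context {X : topologicalType} {R : realType}.

Lemma mul_fun_eq0P (f g : X -> R) :
  (fun x => f x * g x) = (fun _ => 0) <-> Zset f `|` Zset g = setT.
Proof.
split=> [fg0 | Zfg].
  apply/seteqP; split=> // x _.
  by have /eqP := congr1 (fun F => F x) fg0; rewrite mulf_eq0 => /orP[]/eqP; [left|right].
apply/funext => x; have : (Zset f `|` Zset g) x by rewrite Zfg.
by case=> ->; rewrite ?mul0r ?mulr0.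
Qed.

Lemma mul_fun_eq0_zero {f h : X -> R} :
  h <> (fun _ => 0) -> (fun x => f x * h x) = (fun _ => 0) ->
  exists2 a, f a = 0 & h a <> 0.
Proof.
move=> h_neq0 fh0; have [a ha] : exists a, h a <> 0.
  by apply: contra_notP h_neq0 => hz; apply/funext => a; apply: contra_notP hz; exists a.
exists a => //; have /eqP := congr1 (fun F => F a) fh0.
by rewrite mulf_eq0 => /orP[/eqP // | /eqP].
Qed.

Lemma vertex_zero {f : X -> R} : vertex f -> exists a, f a = 0.
Proof.
by case=> _ [_ [h [_ [h_neq0 fh0]]]]; have [a fa _] := mul_fun_eq0_zero h_neq0 fh0; exists a.
Qed.

Lemma indic1_neq0 (a : X) : \1_[set a] <> (fun _ => 0 : R).
Proof. by move/(congr1 (fun F => F a)); rewrite indicE in_set1 eqxx => /eqP; rewrite oner_eq0. Qed.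

Lemma indic1_neq (f : X -> R) (a : X) : f a = 0 -> f <> \1_[set a].
Proof.
move=> fa /(congr1 (fun F => F a)); rewrite fa indicE in_set1 eqxx => /eqP.
by rewrite eq_sym oner_eq0.
Qed.

Lemma indic1_out (a x : X) : x <> a -> \1_[set a] x = 0 :> R.
Proof. by move=> xa; rewrite indicE in_set1; case: eqP. Qed.

Lemma mul_indic1 (f : X -> R) (a : X) :
  f a = 0 -> (fun x => f x * \1_[set a] x) = (fun _ => 0).
Proof.
move=> fa; apply/funext => x; rewrite indicE in_set1.
by case: eqP => [-> | _]; rewrite ?fa ?mul0r ?mulr0.
Qed.
Lemma CcF_indic1 (a : X) : accessible_space X -> CcF (\1_[set a] : X -> R).
Proof.
move=> hT1; split.
  apply/finite_set_countable/(sub_finite_set _ (finite_set2 (0 : R) 1)).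
  by move=> _ [y _ <-]; rewrite indicE; case: (y \in _); [right | left].
apply: (sub_finite_set _ (finite_set1 a)) => y /= y_disc.
apply: contra_notP y_disc => ya; apply: (near_cst_continuous 0).
have oCa : open (~` [set a]) by apply/closed_openC/accessible_closed_set1.
by apply: filterS (open_nbhs_nbhs (conj oCa ya)) => z /indic1_out.
Qed.

Lemma adj_sym {f g : X -> R} : adj f g -> adj g f.
Proof.
case=> vf [vg [fg fg0]]; do 3!split => //; first exact: nesym.
by apply/funext => x; rewrite mulrC (congr1 (fun F => F x) fg0).
Qed.

Lemma walk_cons {n : nat} {f h g : X -> R} : adj f h -> walk n h g -> walk n.+1 f g.
Proof.
move=> fh [v [v0 [vn vadj]]].
exists (fun i => if i is i'.+1 then v i' else f); do 2!split=> //.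
by case=> [_ | i /vadj]; rewrite ?v0.
Qed.

Lemma walk0_refl (f : X -> R) : walk 0 f f.
Proof. by exists (fun _ => f). Qed.

Lemma walk0_eq (f g : X -> R) : walk 0 f g -> f = g.
Proof. by case=> v [<- [<- _]]. Qed.

Lemma walk1P (f g : X -> R) : walk 1 f g <-> adj f g.
Proof.
split; first by case=> v [<- [<- /(_ 0%N isT)]].
by move=> fg; apply: walk_cons fg (walk0_refl g).
Qed.

Lemma adjP (f g : X -> R) : vertex f -> vertex g -> f <> g ->
  adj f g <-> Zset f `|` Zset g = setT.
Proof. by move=> vf vg fg; rewrite -mul_fun_eq0P; split=> [[_ [_ []]] | ]. Qed.

Lemma walk2_common_zero (f g : X -> R) : walk 2 f g -> exists a, f a = 0 /\ g a = 0.
Proof.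
case=> v [<- [<- vadj]].
have [_ [[_ [v1_neq0 _]] [_ fv1]]] := vadj 0%N isT.
have [_ [_ [_ v1g]]] := vadj 1%N isT.
have [a fa v1a] := mul_fun_eq0_zero v1_neq0 fv1.
exists a; split=> //.
by have /eqP := congr1 (fun F => F a) v1g; rewrite mulf_eq0 => /orP[/eqP | /eqP].
Qed.

Section TwoPointT1.
Hypothesis hT1 : accessible_space X.
Hypothesis hX : exists x y : X, x <> y.

Lemma vertex_indic1 (a : X) : vertex (\1_[set a] : X -> R).
Proof.
have [b ab] : exists b, a <> b.
  have [x [y xy]] := hX; have [-> | /eqP ax] := eqVneq a x; [by exists y | by exists x].
split; first exact: CcF_indic1.
split; first exact: indic1_neq0.
exists \1_[set b]; split; first exact: CcF_indic1.
split; first exact: indic1_neq0.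
exact/mul_indic1/indic1_out/nesym.
Qed.

Lemma adj_indic1 {f : X -> R} {a : X} : vertex f -> f a = 0 -> adj f \1_[set a].
Proof.
move=> vf fa; split=> //; split; first exact: vertex_indic1.
by split; [exact: indic1_neq | exact: mul_indic1].
Qed.

Lemma adj_indic1_indic1 {a b : X} : a <> b -> adj (\1_[set a] : X -> R) \1_[set b].
Proof. by move=> ab; apply: adj_indic1; [exact: vertex_indic1 | exact/indic1_out/nesym]. Qed.

Lemma walk2_Zset {f g : X -> R} : vertex f -> vertex g ->
  walk 2 f g <-> Zset f `&` Zset g <> set0.
Proof.
move=> vf vg; split=> [/walk2_common_zero [a fga] | fg_meet].
  by move/seteqP=> [/(_ a fga)].
have [a [fa ga]] : Zset f `&` Zset g !=set0 by apply: contra_notP fg_meet => /nonemptyPn.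
apply: walk_cons (adj_indic1 vf fa) _.
exact/walk1P/adj_sym/adj_indic1.
Qed.

Lemma walk3_Zset {f g : X -> R} : vertex f -> vertex g ->
  Zset f `&` Zset g = set0 -> walk 3 f g.
Proof.
move=> vf vg fg_disj; have [a fa] := vertex_zero vf; have [b gb] := vertex_zero vg.
have ab : a <> b.
  by move=> eab; rewrite -eab in gb; move/seteqP: fg_disj => [/(_ a (conj fa gb))].
apply: walk_cons (adj_indic1 vf fa) (walk_cons (adj_indic1_indic1 ab) _).
exact/walk1P/adj_sym/adj_indic1.
Qed.

End TwoPointT1.

End ZeroDivisorGraph.

Theorem theorem8p5 (X : topologicalType) (R : realType)
  (hT1 : accessible_space X) (hX : exists x y : X, x <> y)
  (f g : X -> R) (hf : vertex f) (hg : vertex g) (hfg : f <> g) :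
  (zd_dist f g 1 <-> Zset f `|` Zset g = setT) /\
  (zd_dist f g 2 <-> (Zset f `|` Zset g <> setT /\ Zset f `&` Zset g <> set0)) /\
  (zd_dist f g 3 <-> (Zset f `|` Zset g <> setT /\ Zset f `&` Zset g = set0)).
Proof.
have no_walk0 : ~ walk 0 f g by move/walk0_eq.
have walk1_iff : walk 1 f g <-> Zset f `|` Zset g = setT.
  by rewrite walk1P; exact: adjP.
have walk2_iff := walk2_Zset hT1 hX hf hg.
split; [|split].
- split=> [[/walk1_iff] // | /walk1_iff fg1]; split=> //.
  by case=> [_|//].
- split=> [[/walk2_iff fg2 no_walk] | [fg1 /walk2_iff fg2]].
    by split=> // /walk1_iff; exact: no_walk 1%N isT.
  by split=> // -[|[|//]] _ // /walk1_iff.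
- split=> [[_ no_walk] | [fg1 fg_disj]].
    split; first by move/walk1_iff; exact: no_walk 1%N isT.
    by apply: contra_notP (no_walk 2%N isT) => /walk2_iff.
  split; first exact: walk3_Zset.
  by case=> [|[|[|//]]] _ //; [move/walk1_iff | move/walk2_iff].
Qed.
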